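(* Let $\pi_E$ be a deterministic expert policy in a finite MDP whose induced chain $P_E$ is irreducible and aperiodic, with stationary state-action distribution $\rho^E$ and mixing time $\tau_{\mathrm{mix}}$. Generate an expert trajectory $s_1,a_1,\dots,s_N,a_N$, let $D$ be the set of state-action pairs it visits, and define $R_{\mathrm{int}}(s,a)=\mathbb{1}\{(s,a)\in D\}$. Then for every $\epsilon>0$, with probability at least $1-2\exp\!\big(-\frac{\epsilon^2N}{4.5\,\tau_{\mathrm{mix}}}\big)$ the dataset is such that $\mathbb{E}_{\rho^E}[R_{\mathrm{int}}]\ge 1-\epsilon-\sqrt{8|S|\tau_{\mathrm{mix}}/N}$, and consequently any policy $\pi_I$ (inducing an irreducible aperiodic chain, with stationary state-action distribution $\rho^I$) that maximizes the expected per-step intrinsic reward, in the sense that $\mathbb{E}_{\rho^I}[R_{\mathrm{int}}]\ge\mathbb{E}_{\rho^E}[R_{\mathrm{int}}]$, satisfies $$\mathbb{E}_{\rho^I}[R_{\mathrm{int}}]\;\ge\;1-\epsilon-\sqrt{\frac{8|S|\tau_{\mathrm{mix}}}{N}}.$$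
   Context: A policy $\pi$ in a finite MDP (states $S$, actions $A$, kernel $T$) induces the chain $P_\pi(s,s')=\sum_a\pi(a\mid s)T(s'\mid s,a)$; if irreducible and aperiodic it has stationary distribution $\rho^\pi_S$ and stationary state-action distribution $\rho^\pi(s,a)=\rho^\pi_S(s)\pi(a\mid s)$; $\mathbb{E}_{\rho^\pi}[R]=\sum_{s,a}\rho^\pi(s,a)R(s,a)$. Here $P_E=P_{\pi_E}$, $\rho^E=\rho^{\pi_E}$, $\rho^E_S=\rho^{\pi_E}_S$, $\rho^I=\rho^{\pi_I}$. The mixing time $\tau_{\mathrm{mix}}$ is the smallest integer $t\ge0$ with $\max_{s'}\|\mathbb{1}(s')^\top P_E^t-\rho^E_S\|_{\mathrm{TV}}\le\tfrac14$, where $\|\rho_1-\rho_2\|_{\mathrm{TV}}=\sup_{M}|\rho_1(M)-\rho_2(M)|$. The trajectory is generated by running $\pi_E$ in the MDP. *)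

From HB Require Import structures.
From mathcomp Require Import all_boot all_order all_algebra.
From mathcomp Require Import boolp reals.
From mathcomp Require Import sequences exp.
Set Implicit Arguments. Unset Strict Implicit. Unset Printing Implicit Defensive.
Import Order.TTheory GRing.Theory Num.Theory.
Local Open Scope ring_scope.

Section MDP.
Variables (R : realType) (S A : finType).

Definition is_distr (T : finType) (p : T -> R) :=
  (forall x, 0 <= p x) /\ \sum_x p x = 1.

Definition is_kernel (T : S -> A -> S -> R) := forall s a, is_distr (T s a).

Definition is_policy (pi : S -> A -> R) := forall s, is_distr (pi s).

Definition det_policy (piE : S -> A) : S -> A -> R :=
  fun s a => (a == piE s)%:R.

Definition induced_chain (T : S -> A -> S -> R) (pi : S -> A -> R) : S -> S -> R :=
  fun s s' => \sum_a pi s a * T s a s'.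

Fixpoint mpow (P : S -> S -> R) (t : nat) : S -> S -> R :=
  match t with
  | 0 => fun s s' => (s == s')%:R
  | t'.+1 => fun s s' => \sum_u mpow P t' s u * P u s'
  end.

Definition irreducible (P : S -> S -> R) :=
  forall s s', exists t, 0 < mpow P t s s'.

(* every state has period 1: no d > 1 divides all return times *)
Definition aperiodic (P : S -> S -> R) :=
  forall s (d : nat), (1 < d)%N ->
    exists t : nat, [/\ (0 < t)%N, 0 < mpow P t s s & ~~ (d %| t)%N].

Definition is_stationary (P : S -> S -> R) (rho : S -> R) :=
  is_distr rho /\ forall s', \sum_s rho s * P s s' = rho s'.

Definition sa_dist (rhoS : S -> R) (pi : S -> A -> R) : S * A -> R :=
  fun sa => rhoS sa.1 * pi sa.1 sa.2.

Definition expect (rho : S * A -> R) (Rw : S * A -> R) :=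
  \sum_(sa : S * A) rho sa * Rw sa.

Definition tv (p q : S -> R) : R :=
  \big[Num.max/0]_(M : {set S}) `|\sum_(x in M) p x - \sum_(x in M) q x|.

Definition mixed_at (P : S -> S -> R) (rho : S -> R) (t : nat) :=
  forall s', tv (mpow P t s') rho <= 4^-1.

Definition is_mixing_time (P : S -> S -> R) (rho : S -> R) (tau : nat) :=
  mixed_at P rho tau /\ forall t, (t < tau)%N -> ~ mixed_at P rho t.

Fixpoint path_prob (P : S -> S -> R) (s : S) (xs : seq S) : R :=
  match xs with
  | [::] => 1
  | y :: ys => P s y * path_prob P y ys
  end.

Definition traj_prob (mu : S -> R) (P : S -> S -> R) (xs : seq S) : R :=
  match xs with
  | [::] => 1
  | s :: ys => mu s * path_prob P s ys
  end.

(* intrinsic reward: indicator of the set D of visited state-action pairs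
   (s_i, a_i) = (s_i, piE s_i) *)
Definition R_int (piE : S -> A) (xs : seq S) : S * A -> R :=
  fun sa => (sa \in [seq (s, piE s) | s <- xs])%:R.

End MDP.

Arguments det_policy {R S A}.
Arguments R_int {R S A}.

From HB Require Import structures.
From mathcomp Require Import all_boot all_order all_algebra.
From mathcomp Require Import boolp reals.
From mathcomp Require Import sequences exp.
From mathcomp Require Import ring lra.
Import Order.TTheory GRing.Theory Num.Theory.
Local Open Scope ring_scope.
Set Implicit Arguments. Unset Strict Implicit. Unset Printing Implicit Defensive.

(* Put m := eps + sqrt(8 |S| tau / N).  If the visited states have stationary mass below
   1 - m, the trajectory avoids a set B of stationary mass above m.  The worst-case total
   variation distance d(t) of P^t to stationarity satisfies d(s + t) <= 2 d(s) d(t), so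
   d(k tau) <= 2^-(k+1) <= m/2 for k = floor(1/m); hence every block of k tau steps enters
   B with probability at least m/2 whatever its starting state, and B is avoided for N
   steps with probability at most (1 - m/2)^floor((N-1) / (k tau)).  A union bound over
   the 2^|S| sets B and the choice of m give a failure probability at most
   exp(-eps^2 N / (4.5 tau)).  The claim about pi_I is then transitivity of <=. *)

Lemma big_tuple_cons (V : nmodType) (S : finType) n (F : n.+1.-tuple S -> V) :
  \sum_(t : n.+1.-tuple S) F t = \sum_(x : S) \sum_(t : n.-tuple S) F [tuple of x :: t].
Proof.
rewrite pair_bigA /= (reindex (fun p : S * n.-tuple S => [tuple of p.1 :: p.2])) //=.
exists (fun t : n.+1.-tuple S => (thead t, [tuple of behead t])).
  by case=> x t _; congr pair; apply/val_inj.
by move=> [[|x s] //= ?] _; apply/val_inj.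
Qed.

Lemma ler_sum_pred (R : numDomainType) (I : finType) (p : pred I) (f g : I -> R) :
  (forall i, p i -> f i <= g i) -> (forall i, 0 <= g i) ->
  \sum_(i | p i) f i <= \sum_i g i.
Proof.
move=> fg g_ge0; rewrite big_mkcond /=; apply: ler_sum => i _.
by case: ifP => // /fg.
Qed.

Lemma sum_pred_complement (R : pzRingType) (I : finType) (p : pred I) (F : I -> R) :
  \sum_i F i = 1 -> \sum_(i | p i) F i = 1 - \sum_(i | ~~ p i) F i.
Proof. by move=> <-; rewrite [\sum_i F i](bigID p) /= addrK. Qed.

Lemma sumr_notin (R : pzRingType) (I : finType) (B : {pred I}) (F : I -> R) :
  \sum_i F i * (i \notin B)%:R = \sum_i F i - \sum_(i in B) F i.
Proof.
rewrite [X in X - _](bigID (mem B)) /= addrAC subrr add0r [RHS]big_mkcond /=.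
by apply: eq_bigr => i _; case: (i \in B); rewrite ?mulr0 ?mulr1.
Qed.

Lemma sum_centered_mulr_norm_le (R : realFieldType) (I : finType) (a f : I -> R) (d1 d2 : R) :
  \sum_i a i = 0 -> \sum_(i | 0 < a i) a i <= d1 -> 0 <= d2 ->
  (forall i, `|f i| <= d2) -> `|\sum_i a i * f i| <= 2 * d1 * d2.
Proof.
move=> a_sum0 pos_le d2_ge0.
(* As the [a i] sum to [0], shifting [g] by [d2] changes nothing; afterwards only the
   positive [a i] contribute, each against a factor in [[0, 2 d2]]. *)
suff up g : (forall i, `|g i| <= d2) -> \sum_i a i * g i <= 2 * d1 * d2.
  move=> f_le; rewrite ler_norml up // andbT lerNl -sumrN.
  by under eq_bigr do rewrite -mulrN; apply: up => i; rewrite normrN.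
move=> g_le; have -> : \sum_i a i * g i = \sum_i a i * (g i + d2).
  by under [RHS]eq_bigr do rewrite mulrDr; rewrite big_split /= -mulr_suml a_sum0 mul0r addr0.
apply: (@le_trans _ _ (\sum_(i | 0 < a i) a i * (2 * d2))); last first.
  by rewrite -mulr_suml; nra.
rewrite [X in _ <= X]big_mkcond /=; apply: ler_sum => i _.
have := g_le i; rewrite ler_norml => /andP[gl gu].
by case: (ltrP 0 (a i)) => ai; nra.
Qed.

Lemma is_distr_card_gt0 (R : realType) (T : finType) (p : T -> R) :
  is_distr p -> (0 < #|T|)%N.
Proof.
case=> _ p_sum1; apply/card_gt0P.
case: (pickP (fun _ : T => true)) => [x _|no_elt]; first by exists x.
by move: p_sum1; rewrite big_pred0 // => /eqP; rewrite eq_sym oner_eq0.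
Qed.

Lemma block_length_exists (R : realType) (m : R) : 0 < m < 1 ->
  exists k : nat, [/\ (0 < k)%N, k%:R * m <= 1 & 2 ^- k.+1 <= m / 2].
Proof.
case/andP => m_gt0 m_lt1; set k := Num.truncn m^-1.
have /andP[k_le k_gt] : k%:R <= m^-1 < k.+1%:R by rewrite truncn_itv // invr_ge0 ltW.
have m_inv : m * m^-1 = 1 by rewrite mulfV // gt_eqF.
have inv_gt1 : 1 < m^-1 by rewrite invf_gt1.
have k_gt0 : (0 < k)%N by rewrite -(ltr_nat R); lra.
have two_k : k.+1%:R <= 2 ^+ k :> R by rewrite -natrX ler_nat ltn_expl.
have two_k1 : 2 * 2 ^+ k * 2 ^- k.+1 = 1 :> R by rewrite -exprS mulfV // expf_neq0 // pnatr_eq0.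
have inv_ge0 : 0 <= 2 ^- k.+1 :> R by rewrite invr_ge0 exprn_ge0.
have m_two_k : 1 <= m * 2 ^+ k by nra.
by exists k; split => //; nra.
Qed.

Lemma pow2_mul_tail_le_expR (R : realType) (s K : nat) (m : R) : m <= 2 ->
  2 ^+ s * (1 - m / 2) ^+ K <= expR (s%:R - K%:R * (m / 2)).
Proof.
move=> m_le2; have -> : s%:R - K%:R * (m / 2) = s%:R * 1 + K%:R * - (m / 2) by ring.
rewrite expRD !expRM_natl; apply: ler_pM; rewrite ?exprn_ge0 //; try lra.
- by apply: lerXn2r; rewrite ?nnegrE ?expR_ge0 //; have := expR_ge1Dx (1 : R); lra.
- by apply: lerXn2r; rewrite ?nnegrE ?expR_ge0 //; [lra | have := expR_ge1Dx (- (m / 2)); lra].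
Qed.

(* In fact [K m / 2 - s >= eps^2 N / (2 tau) + 3 s - 1/2] for [m = eps + c]; the constant
   [4.5] of the statement leaves room to spare. *)
Lemma coverage_exponent_le (R : realFieldType) (eps c k K tau N s : R) :
  0 < eps -> 0 <= c -> 0 <= N -> c ^+ 2 * N = 8 * s * tau -> 1 <= tau -> 1 <= s ->
  0 <= K -> 1 <= k -> k * (eps + c) <= 1 -> N <= (K + 1) * k * tau ->
  s - K * ((eps + c) / 2) <= - (eps ^+ 2 * N) / (45%:R / 10%:R * tau).
Proof.
move=> eps_gt0 c_ge0 N_ge0 cN tau_ge1 s_ge1 K_ge0 k_ge1 km N_le.
set m := eps + c in km *.
have m_ge0 : 0 <= m by rewrite /m; lra.
have mN : m * N <= (K + 1) * tau.
  have : m * N <= m * ((K + 1) * k * tau) by rewrite ler_wpM2l.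
  have : 0 <= (K + 1) * tau * (1 - k * m) by rewrite mulr_ge0 ?subr_ge0 //; nra.
  nra.
have m2N : eps ^+ 2 * N + c ^+ 2 * N <= m * (K + 1) * tau.
  have : m * (m * N) <= m * ((K + 1) * tau) by rewrite ler_wpM2l.
  have : 0 <= eps * c * N by rewrite !mulr_ge0 //; lra.
  rewrite /m; nra.
have m_le1 : m <= 1 by nra.
have -> : 45%:R / 10%:R = 9 / 2 :> R.
  by apply/eqP; rewrite eqr_div ?pnatr_eq0 // -!natrM.
rewrite ler_pdivlMr; last by lra.
nra.
Qed.

Definition visited_mass (R : nmodType) (S : finType) (rho : S -> R) (xs : seq S) :=
  \sum_(s | s \in xs) rho s.

Section DeterministicPolicy.
Variables (R : realType) (S A : finType) (T : S -> A -> S -> R) (piE : S -> A).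

Lemma det_chain_distr : is_kernel T -> forall s, is_distr (induced_chain T (det_policy piE) s).
Proof.
move=> T_kernel s; suff -> : induced_chain T (det_policy piE) s = T s (piE s) by [].
apply/funext => s'; rewrite /induced_chain (bigD1 (piE s)) //= big1 ?addr0.
  by rewrite /det_policy eqxx mul1r.
by move=> a /negPf; rewrite /det_policy => ->; rewrite mul0r.
Qed.

Lemma expect_det_R_int (rhoS : S -> R) (xs : seq S) :
  expect (sa_dist rhoS (det_policy piE)) (R_int piE xs) = visited_mass rhoS xs.
Proof.
rewrite /expect /visited_mass.
transitivity (\sum_s \sum_a sa_dist rhoS (det_policy piE) (s, a) * R_int piE xs (s, a)).
  by rewrite pair_bigA; apply: eq_bigr => [[s a]] _.
rewrite [RHS]big_mkcond /=; apply: eq_bigr => s _.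
rewrite (bigD1 (piE s)) //= big1 ?addr0 => [|a /negPf a_ne].
  rewrite /sa_dist /det_policy /R_int /= eqxx mulr1.
  rewrite (mem_map (f := fun s => (s, piE s))) => [|x y [] //].
  by case: (s \in xs); rewrite ?mulr1 ?mulr0.
by rewrite /sa_dist /det_policy /= a_ne mulr0 mul0r.
Qed.

End DeterministicPolicy.

Section MarkovChain.
Variables (R : realType) (S : finType) (P : S -> S -> R).
Hypothesis P_distr : forall s, is_distr (P s).

Lemma mpow_ge0 t s s' : 0 <= mpow P t s s'.
Proof.
elim: t s s' => [|t IH] s s' /=; first exact: ler0n.
by apply: sumr_ge0 => u _; rewrite mulr_ge0 //; case: (P_distr u).
Qed.

Lemma mpow_sum1 t s : \sum_s' mpow P t s s' = 1.
Proof.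
elim: t s => [|t IH] s /=.
  by rewrite (bigD1 s) //= eqxx big1 ?addr0 // => u /negPf; rewrite eq_sym => ->.
rewrite exchange_big /= -(IH s); apply: eq_bigr => u _.
by rewrite -mulr_sumr (proj2 (P_distr u)) mulr1.
Qed.

Lemma mpowD s t x y : mpow P (s + t) x y = \sum_u mpow P s x u * mpow P t u y.
Proof.
elim: t y => [|t IH] y /=.
  rewrite addn0 (bigD1 y) //= eqxx mulr1 big1 ?addr0 // => u /negPf.
  by rewrite eq_sym => ->; rewrite mulr0.
rewrite addnS /=; under eq_bigr do rewrite IH mulr_suml.
rewrite exchange_big /=; apply: eq_bigr => u _.
by rewrite mulr_sumr; apply: eq_bigr => v _; rewrite mulrA.
Qed.

Lemma mpow1 x y : mpow P 1 x y = P x y.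
Proof.
rewrite /= (bigD1 x) //= eqxx mul1r big1 ?addr0 // => u /negPf.
by rewrite eq_sym => ->; rewrite mul0r.
Qed.

Lemma path_prob_ge0 xs s : 0 <= path_prob P s xs.
Proof. by elim: xs s => [|y ys IH] s //=; rewrite mulr_ge0 //; case: (P_distr s). Qed.

Lemma path_prob_sum1 n s : \sum_(ys : n.-tuple S) path_prob P s ys = 1.
Proof.
elim: n s => [|n IH] s.
  by rewrite (big_pred1 [tuple]) // => t; symmetry; apply/eqP; exact: tuple0.
rewrite big_tuple_cons -[RHS](proj2 (P_distr s)); apply: eq_bigr => y _ /=.
by rewrite -mulr_sumr IH mulr1.
Qed.

Variable rho : S -> R.
Hypothesis rho_stat : is_stationary P rho.

Lemma stationary_mass_le1 (M : {set S}) : \sum_(y in M) rho y <= 1.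
Proof.
have [[rho_ge0 rho_sum1] _] := rho_stat.
by rewrite -rho_sum1 [X in _ <= X](bigID (mem M)) /= lerDl sumr_ge0.
Qed.

Lemma stationary_mpow t y : \sum_u rho u * mpow P t u y = rho y.
Proof.
elim: t y => [|t IH] y /=.
  by rewrite (bigD1 y) //= eqxx mulr1 big1 ?addr0 // => u /negPf ->; rewrite mulr0.
under eq_bigr do rewrite mulr_sumr.
rewrite exchange_big /= -[RHS](proj2 rho_stat y); apply: eq_bigr => v _.
by rewrite -IH mulr_suml; apply: eq_bigr => u _; rewrite mulrA.
Qed.

(* [d(t) <= d] for the usual [d(t) = max_x ||P^t(x, .) - rho||_TV]. *)
Definition mixes_within t (d : R) := forall x (M : {set S}),
  `|\sum_(y in M) mpow P t x y - \sum_(y in M) rho y| <= d.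

Lemma mixes_within_ge0 t d (x : S) : mixes_within t d -> 0 <= d.
Proof. by move/(_ x set0); apply: le_trans; rewrite !big_set0 subrr normr0. Qed.

Lemma mixed_at_mixes_within t : mixed_at P rho t -> mixes_within t 4^-1.
Proof. by move=> mixed x M; apply: le_trans (mixed x); rewrite /tv (bigD1 M) //= le_max lexx. Qed.

Lemma mpowD_centered s t x (M : {set S}) :
  \sum_(y in M) mpow P (s + t) x y - \sum_(y in M) rho y =
  \sum_u (mpow P s x u - rho u) * (\sum_(y in M) mpow P t u y - \sum_(y in M) rho y).
Proof.
have [[_ rho_sum1] _] := rho_stat.
have rho_M : \sum_u rho u * (\sum_(y in M) mpow P t u y) = \sum_(y in M) rho y.
  under eq_bigr do rewrite mulr_sumr.
  by rewrite exchange_big /=; apply: eq_bigr => y _; exact: stationary_mpow.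
have mpow_M : \sum_u mpow P s x u * (\sum_(y in M) mpow P t u y) =
              \sum_(y in M) mpow P (s + t) x y.
  under eq_bigr do rewrite mulr_sumr.
  by rewrite exchange_big /=; apply: eq_bigr => y _; rewrite mpowD.
under [RHS]eq_bigr do rewrite mulrBl !mulrBr.
rewrite !sumrB -!mulr_suml mpow_sum1 rho_sum1 rho_M mpow_M; ring.
Qed.

Lemma mixes_withinD s t d1 d2 :
  mixes_within s d1 -> mixes_within t d2 -> mixes_within (s + t) (2 * d1 * d2).
Proof.
move=> mix_s mix_t x M; rewrite mpowD_centered.
apply: sum_centered_mulr_norm_le (mixes_within_ge0 x mix_t) _ => [||u].
- by rewrite sumrB mpow_sum1 (proj2 (proj1 rho_stat)) subrr.
- have := mix_s x [set u | 0 < mpow P s x u - rho u].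
  by rewrite -sumrB big_set; apply: le_trans (ler_norm _).
- exact: mix_t.
Qed.

Lemma mixes_within_iter t k : mixes_within t 4^-1 -> (0 < k)%N ->
  mixes_within (k * t) (2 ^- k.+1).
Proof.
move=> mix_t; case: k => // k _; elim: k => [|k IH]; first by rewrite mul1n expr2 -natrM.
have -> : 2 ^- k.+3 = 2 * 4^-1 * 2 ^- k.+2 :> R.
  by rewrite !exprS; field; rewrite expf_neq0 // pnatr_eq0.
by rewrite mulSn; apply: mixes_withinD.
Qed.

Section Avoidance.
Variable B : {set S}.

Fixpoint avoid_prob n s : R :=
  if n is n'.+1 then \sum_y P s y * (y \notin B)%:R * avoid_prob n' y else 1.

Lemma avoid_prob_ge0 n s : 0 <= avoid_prob n s.
Proof.
elim: n s => [|n IH] s /=; first exact: ler01.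
by apply: sumr_ge0 => y _; rewrite !mulr_ge0 //; case: (P_distr s).
Qed.

Lemma avoid_prob_le1 n s : avoid_prob n s <= 1.
Proof.
elim: n s => [|n IH] s //=; rewrite -[X in _ <= X](proj2 (P_distr s)).
apply: ler_sum => y _; rewrite -mulrA ler_piMr //; first by case: (P_distr s).
by case: (y \in B); rewrite /= ?mul0r ?mul1r.
Qed.

Lemma avoid_prob_tuple n s :
  \sum_(ys : n.-tuple S) path_prob P s ys * (all (fun y => y \notin B) ys)%:R =
  avoid_prob n s.
Proof.
elim: n s => [|n IH] s.
  by rewrite (big_pred1 [tuple]) /= ?mulr1 // => t; symmetry; apply/eqP; exact: tuple0.
rewrite big_tuple_cons /=; apply: eq_bigr => y _.
by rewrite -IH mulr_sumr; apply: eq_bigr => t _ /=; rewrite -mulnb natrM; ring.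
Qed.

(* Only an inequality: avoidance of [B] during the first [L] steps is dropped. *)
Lemma avoid_prob_shift L n s :
  avoid_prob (L.+1 + n) s <= \sum_y mpow P L.+1 s y * (y \notin B)%:R * avoid_prob n y.
Proof.
elim: L s => [|L IH] s.
  by rewrite add1n; under [X in _ <= X]eq_bigr do rewrite mpow1.
rewrite addSn /=.
have -> : \sum_y mpow P (1 + L.+1) s y * (y \notin B)%:R * avoid_prob n y
   = \sum_u P s u * \sum_y mpow P L.+1 u y * (y \notin B)%:R * avoid_prob n y.
  under eq_bigr do rewrite mpowD !mulr_suml.
  rewrite exchange_big; apply: eq_bigr => u _.
  by rewrite mulr_sumr; apply: eq_bigr => y _; rewrite mpow1 !mulrA.
apply: ler_sum => u _; rewrite -mulrA ler_wpM2l //; first by case: (P_distr s).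
have [_ | _] := boolP (u \in B); last by rewrite mul1r IH.
by rewrite mul0r sumr_ge0 // => y _; rewrite !mulr_ge0 ?mpow_ge0 ?avoid_prob_ge0.
Qed.

Lemma avoid_prob_block L d n a s :
  mixes_within L.+1 d -> (forall y, avoid_prob n y <= a) ->
  avoid_prob (L.+1 + n) s <= (1 - (\sum_(y in B) rho y - d)) * a.
Proof.
move=> mix avoid_le; apply: le_trans (avoid_prob_shift L n s) _.
apply: (@le_trans _ _ (\sum_y mpow P L.+1 s y * (y \notin B)%:R * a)).
  by apply: ler_sum => y _; rewrite ler_wpM2l // mulr_ge0 ?mpow_ge0.
rewrite -mulr_suml sumr_notin mpow_sum1 ler_wpM2r //.
  exact: le_trans (avoid_prob_ge0 n s) (avoid_le s).
by have := mix s B; rewrite ler_norml => /andP[]; lra.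
Qed.

Lemma avoid_prob_blocks L d k r s : (0 < L)%N -> mixes_within L d ->
  avoid_prob (k * L + r) s <= (1 - (\sum_(y in B) rho y - d)) ^+ k.
Proof.
case: L => // L _ mix; elim: k s => [|k IH] s; first by rewrite expr0 avoid_prob_le1.
by rewrite mulSn -addnA exprS; apply: avoid_prob_block.
Qed.

End Avoidance.

Variable mu : S -> R.
Hypothesis mu_distr : is_distr mu.

Lemma traj_prob_ge0 xs : 0 <= traj_prob mu P xs.
Proof. by case: xs => [|x xs] /=; rewrite ?ler01 // mulr_ge0 ?path_prob_ge0 //; case: mu_distr. Qed.

Lemma traj_prob_sum1 n : \sum_(xs : n.+1.-tuple S) traj_prob mu P xs = 1.
Proof.
rewrite big_tuple_cons -[RHS](proj2 mu_distr); apply: eq_bigr => x _ /=.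
by rewrite -mulr_sumr path_prob_sum1 mulr1.
Qed.

Lemma traj_avoid_prob_le (B : {set S}) L d n : (0 < L)%N -> mixes_within L d ->
  \sum_(xs : n.+1.-tuple S) traj_prob mu P xs * (all (fun y => y \notin B) xs)%:R
    <= (1 - (\sum_(y in B) rho y - d)) ^+ (n %/ L).
Proof.
move=> L_gt0 mix; have [mu_ge0 mu_sum1] := mu_distr.
set q := 1 - _.
apply: (@le_trans _ _ (\sum_x mu x * q ^+ (n %/ L))); last by rewrite -mulr_suml mu_sum1 mul1r.
rewrite big_tuple_cons; apply: ler_sum => x _.
apply: le_trans (_ : mu x * avoid_prob B n x <= _); last first.
  by rewrite ler_wpM2l // {1}(divn_eq n L) avoid_prob_blocks.
rewrite -avoid_prob_tuple mulr_sumr; apply: ler_sum => t _ /=.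
rewrite -mulrA ler_wpM2l // -mulnb natrM mulrCA ler_piMl ?mulr_ge0 ?path_prob_ge0 //.
by rewrite lern1 leq_b1.
Qed.

Lemma unvisited_mass_tail L d m n : (0 < L)%N -> mixes_within L d -> 0 <= d ->
  d <= m / 2 -> m <= 2 ->
  \sum_(xs : n.+1.-tuple S | m < \sum_(y | y \notin xs) rho y) traj_prob mu P xs
    <= 2 ^+ #|S| * (1 - m / 2) ^+ (n %/ L).
Proof.
move=> L_gt0 mix d_ge0 dm m_le2.
pose avoiding (B : {set S}) (xs : seq S) : R := (all (fun y => y \notin B) xs)%:R.
apply: (@le_trans _ _ (\sum_(B : {set S} | m < \sum_(y in B) rho y)
                         \sum_(xs : n.+1.-tuple S) traj_prob mu P xs * avoiding B xs)).
  rewrite exchange_big /=; apply: ler_sum_pred => [xs missed_gt|xs]; last first.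
    by apply: sumr_ge0 => B _; rewrite mulr_ge0 ?traj_prob_ge0.
  rewrite (bigD1 [set y | y \notin xs]) /=; last by rewrite big_set.
  have -> : avoiding [set y | y \notin xs] xs = 1.
    by rewrite /avoiding (_ : all _ xs) //; apply/allP => y y_in; rewrite inE y_in.
  by rewrite mulr1 lerDl sumr_ge0 // => B _; rewrite mulr_ge0 ?traj_prob_ge0.
have -> : 2 ^+ #|S| = #|{set S}|%:R :> R.
  by rewrite -[#|{set S}|]cardsT -powersetT card_powerset cardsT natrX.
have -> : #|{set S}|%:R * (1 - m / 2) ^+ (n %/ L) = \sum_(B : {set S}) (1 - m / 2) ^+ (n %/ L).
  by rewrite sumr_const mulr_natl.
apply: ler_sum_pred => [B heavy|B]; last first.
  by rewrite exprn_ge0 //; lra.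
apply: le_trans (traj_avoid_prob_le B n L_gt0 mix) _.
apply: lerXn2r; rewrite ?nnegrE; try lra.
by have := stationary_mass_le1 B; lra.
Qed.

Lemma coverage_failure_le tau n eps : mixed_at P rho tau -> 0 < eps ->
  \sum_(xs : n.+1.-tuple S |
         ~~ (1 - eps - Num.sqrt (8 * #|S|%:R * tau%:R / n.+1%:R) <= visited_mass rho xs))
     traj_prob mu P xs
  <= expR (- (eps ^+ 2 * n.+1%:R) / (45%:R / 10%:R * tau%:R)).
Proof.
move=> mixed eps_gt0; have [[rho_ge0 rho_sum1] _] := rho_stat.
set c := Num.sqrt _; have c_ge0 : 0 <= c by apply: sqrtr_ge0.
have -> : 1 - eps - c = 1 - (eps + c) by rewrite opprD addrA.
set m := eps + c; set fail := (X in X <= _).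
have fail_le1 : fail <= 1.
  by rewrite -(traj_prob_sum1 n); apply: ler_sum_pred => // xs; exact: traj_prob_ge0.
have [->|tau_gt0] := posnP tau; first by rewrite mulr0 invr0 mulr0 expR0.
have [m_ge1|m_lt1] := leP 1 m.
  rewrite /fail big1 ?expR_ge0 // => xs; rewrite -ltNge => visited_lt.
  suff : 0 <= visited_mass rho xs by lra.
  by apply: sumr_ge0.
have m_gt0 : 0 < m by rewrite /m; lra.
have [k [k_gt0 km dk]] : exists k : nat, [/\ (0 < k)%N, k%:R * m <= 1 & 2 ^- k.+1 <= m / 2].
  by apply: block_length_exists; rewrite m_gt0 m_lt1.
have L_gt0 : (0 < k * tau)%N by rewrite muln_gt0 k_gt0.
have mix := mixes_within_iter (mixed_at_mixes_within mixed) k_gt0.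
rewrite /fail (eq_bigl (fun xs : n.+1.-tuple S => m < \sum_(y | y \notin xs) rho y)); last first.
  move=> xs; have mass1 : visited_mass rho xs + \sum_(y | y \notin xs) rho y = 1.
    by rewrite -rho_sum1 [RHS](bigID (mem xs)).
  by rewrite -ltNge; apply/idP/idP => ?; lra.
have d_ge0 : 0 <= 2 ^- k.+1 :> R by rewrite invr_ge0 exprn_ge0.
apply: le_trans (unvisited_mass_tail n L_gt0 mix d_ge0 dk _) _; first lra.
apply: le_trans (pow2_mul_tail_le_expR _ _ _) _; first by lra.
rewrite ler_expR; apply: (coverage_exponent_le (k := k%:R)) => //.
- rewrite sqr_sqrtr ?divfK ?pnatr_eq0 // divr_ge0 // !mulr_ge0 ?ler0n //.
- by rewrite ler1n.
- by rewrite ler1n (is_distr_card_gt0 mu_distr).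
- by rewrite ler1n.
- by rewrite natr1 -!natrM ler_nat -mulnA ltn_ceil.
Qed.

End MarkovChain.

Theorem lemma5 (R : realType) (S A : finType)
  (T : S -> A -> S -> R) (piE : S -> A) (rhoES : S -> R) (tau : nat)
  (mu : S -> R) (N : nat) (eps : R) :
  is_kernel T ->
  irreducible (induced_chain T (det_policy piE)) ->
  aperiodic (induced_chain T (det_policy piE)) ->
  is_stationary (induced_chain T (det_policy piE)) rhoES ->
  is_mixing_time (induced_chain T (det_policy piE)) rhoES tau ->
  is_distr mu ->
  (0 < N)%N ->
  0 < eps ->
  let PE := induced_chain T (det_policy piE) in
  let rhoE := sa_dist rhoES (det_policy piE) in
  let bound := 1 - eps - Num.sqrt (8 * #|S|%:R * tau%:R / N%:R) in
  \sum_(xs : N.-tuple S |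
          (bound <= expect rhoE (R_int piE xs)) &&
          `[< forall (piI : S -> A -> R) (rhoIS : S -> R),
               is_policy piI ->
               irreducible (induced_chain T piI) ->
               aperiodic (induced_chain T piI) ->
               is_stationary (induced_chain T piI) rhoIS ->
               expect rhoE (R_int piE xs)
                 <= expect (sa_dist rhoIS piI) (R_int piE xs) ->
               bound <= expect (sa_dist rhoIS piI) (R_int piE xs) >])
     traj_prob mu PE xs
  >= 1 - 2 * expR (- (eps ^+ 2 * N%:R) / (45%:R / 10%:R * tau%:R)).
Proof.
move=> T_kernel _ _ rhoE_stat mixing mu_distr; case: N => // n _ eps_gt0.
rewrite [is_true _]/=; set bound := 1 - eps - _.
have PE_distr := det_chain_distr piE T_kernel.
rewrite (eq_bigl (fun xs : n.+1.-tuple S => bound <= visited_mass rhoES xs)); last first.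
  move=> xs /=; rewrite expect_det_R_int; apply/andP/idP => [[]//|bound_le]; split => //.
  by apply/asboolP => piI rhoIS _ _ _ _; apply: le_trans.
rewrite (sum_pred_complement _ (traj_prob_sum1 PE_distr mu_distr n)).
have := coverage_failure_le PE_distr rhoE_stat mu_distr n (proj1 mixing) eps_gt0.
have := expR_ge0 (- (eps ^+ 2 * n.+1%:R) / (45%:R / 10%:R * tau%:R)).
lra.
Qed.
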